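(* For every $n\ge 4$, the number of magic quad squares in the EvenQuads-$2^n$ deck is \[2^n(2^n-1)(2^n-2)(2^n-4)(2^n-8)\cdot\Big(10 + 85(2^n-16) + 43(2^n-16)(2^n-32) + (2^n-16)(2^n-32)(2^n-64)\Big).\]
   Context: The EvenQuads-$2^n$ deck consists of $2^n$ cards identified with the integers $0,1,\dots,2^n-1$. Four cards $a,b,c,d$ form a quad if and only if $a\oplus b\oplus c\oplus d=0$, where $\oplus$ is bitwise XOR. A quad square is a $4\times4$ array of $16$ pairwise distinct cards; it is magic if each of its four rows, each of its four columns, and each of its two diagonals forms a quad. *)

From mathcomp Require Import all_boot.
Set Implicit Arguments. Unset Strict Implicit. Unset Printing Implicit Defensive.

Definition card (n : nat) := 'I_(2 ^ n).

Definition is_quad (n : nat) (a b c d : card n) : bool :=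
  Nat.lxor (Nat.lxor (Nat.lxor a b) c) d == 0.

Definition array44 (n : nat) := {ffun 'I_4 * 'I_4 -> card n}.

Definition ix (k : nat) : 'I_4 := inord k.

Definition quad_square (n : nat) (A : array44 n) : bool := injectiveb A.

Definition row_quad n (A : array44 n) (i : 'I_4) : bool :=
  is_quad (A (i, ix 0)) (A (i, ix 1)) (A (i, ix 2)) (A (i, ix 3)).
Definition col_quad n (A : array44 n) (j : 'I_4) : bool :=
  is_quad (A (ix 0, j)) (A (ix 1, j)) (A (ix 2, j)) (A (ix 3, j)).
Definition diag_quad n (A : array44 n) : bool :=
  is_quad (A (ix 0, ix 0)) (A (ix 1, ix 1)) (A (ix 2, ix 2)) (A (ix 3, ix 3)).
Definition antidiag_quad n (A : array44 n) : bool :=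
  is_quad (A (ix 0, ix 3)) (A (ix 1, ix 2)) (A (ix 2, ix 1)) (A (ix 3, ix 0)).

Definition magic_quad_square (n : nat) (A : array44 n) : bool :=
  [&& quad_square A, [forall i, row_quad A i], [forall j, col_quad A j],
      diag_quad A & antidiag_quad A].

(* Fill the sixteen cells one at a time, in an order in which every quad is completed as
   early as possible. The conditions on a magic quad square are XOR relations: the ten quads,
   and distinctness of any two cards. Over GF(2), the card placed next either lies in the span
   of an independent family b_0, ..., b_(r-1) of earlier cards, and is then one of 2^r
   prescribed XOR combinations of them, or it is one of the 2^n - 2^r cards outside that span;
   the relations it satisfies with the earlier cards depend only on which combination it is,
   or on the mere fact that it is new. Hence the number of squares is a sum, over the leaves of
   a finite search tree of bit-mask configurations that does not depend on n, of
   prod_(i<r) (2^n - 2^i), where r is the rank reached at the leaf. Evaluating the tree gives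
   160, 2730, 2837, 171 and 1 leaves of ranks 4, 5, 6, 7 and 8, and the identity
   2^n P_r = P_(r+1) + 2^r P_r for P_r = prod_(i<r) (2^n - 2^i) turns this into the stated
   polynomial. *)

From Stdlib Require Import PeanoNat.
From mathcomp Require Import all_boot ring.

Set Implicit Arguments. Unset Strict Implicit. Unset Printing Implicit Defensive.

Lemma lxorACA a b c d :
  Nat.lxor (Nat.lxor a b) (Nat.lxor c d) = Nat.lxor (Nat.lxor a c) (Nat.lxor b d).
Proof.
rewrite !Nat.lxor_assoc; congr Nat.lxor; rewrite -!Nat.lxor_assoc.
by rewrite (Nat.lxor_comm b).
Qed.

Lemma lxor_eq0 a b : (Nat.lxor a b == 0) = (a == b).
Proof. by apply/eqP/eqP => [/Nat.lxor_eq | ->]; last exact: Nat.lxor_nilpotent. Qed.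

Lemma expn_pow m k : m ^ k = Nat.pow m k.
Proof. by elim: k => //= k IHk; rewrite expnS IHk. Qed.

Lemma lxor_ltn n a b : a < 2 ^ n -> b < 2 ^ n -> Nat.lxor a b < 2 ^ n.
Proof.
rewrite expn_pow => /ltP a_lt /ltP b_lt; apply/ltP.
have pow_neq0 : Nat.pow 2 n <> 0 by apply: Nat.pow_nonzero.
apply/(Nat.div_small_iff _ _ pow_neq0).
by rewrite -Nat.shiftr_div_pow2 Nat.shiftr_lxor !Nat.shiftr_div_pow2 !Nat.div_small.
Qed.

Lemma sum_tuple_cons (T : finType) k (F : k.+1.-tuple T -> nat) :
  \sum_(t : k.+1.-tuple T) F t = \sum_(x : T) \sum_(t : k.-tuple T) F [tuple of x :: t].
Proof.
rewrite pair_big /= (reindex (fun p : T * k.-tuple T => [tuple of p.1 :: p.2])) /=.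
  by apply: eq_bigr => -[x t].
exists (fun t => (thead t, [tuple of behead t])) => [[x t] _ | t _] /=.
  by congr pair; apply: val_inj.
by rewrite -tuple_eta.
Qed.

Lemma sum_nat_split_seq (S : seq nat) m (g : nat -> nat) c :
  uniq S -> all (fun x => x < m) S -> (forall x, x < m -> x \notin S -> g x = c) ->
  \sum_(0 <= x < m) g x = \sum_(x <- S) g x + (m - size S) * c.
Proof.
move=> S_uniq S_lt g_out.
have S_perm : perm_eq [seq x <- index_iota 0 m | x \in S] S.
  apply: uniq_perm => [||x]; [exact/filter_uniq/iota_uniq | exact: S_uniq |].
  by rewrite mem_filter mem_index_iota andb_idr // => /(allP S_lt).
rewrite (bigID (mem S)) /= -big_filter (perm_big _ S_perm); congr addn.
rewrite big_seq_cond (eq_bigr (fun=> c)) => [|x /andP[]]; last first.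
  by rewrite mem_index_iota => /andP[_ x_lt] /g_out->.
rewrite -big_seq_cond big_const_seq iter_addn_0 mulnC; congr muln.
rewrite -(perm_size S_perm) size_filter /index_iota subn0.
by rewrite -[X in X - _](size_iota 0 m) -(count_predC (mem S)) addKn.
Qed.

Lemma cons_inj T (x : T) : injective (cons x).
Proof. by move=> a b []. Qed.

Lemma all_flatten T (P : pred T) (ss : seq (seq T)) :
  all P (flatten ss) = all (all P) ss.
Proof. by elim: ss => //= s ss IHss; rewrite all_cat IHss. Qed.

Lemma uniq_all_nth (T : eqType) (x0 : T) (s : seq T) :
  uniq s = all (fun k => all (fun j => nth x0 s j != nth x0 s k) (iota 0 k)) (iota 0 (size s)).
Proof.
rewrite uniq_pairwise; apply/(pairwiseP x0)/allP => [s_pw k | s_nth i j i_lt j_lt ij].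
  rewrite mem_iota add0n => k_lt; apply/allP => j; rewrite mem_iota add0n => j_lt.
  by apply: s_pw; rewrite // inE (ltn_trans j_lt).
move: j_lt; rewrite inE => j_lt.
by apply: (allP (s_nth j _)); rewrite mem_iota.
Qed.

Fixpoint bits_xor (a b : bitseq) : bitseq :=
  match a, b with
  | [::], _ => b
  | _, [::] => a
  | x :: a', y :: b' => (x (+) y) :: bits_xor a' b'
  end.

Fixpoint xor_comb (bs : seq nat) (a : bitseq) : nat :=
  match bs, a with
  | b :: bs', x :: a' => Nat.lxor (if x then b else 0) (xor_comb bs' a')
  | _, _ => 0
  end.

Fixpoint bitseqs (r : nat) : seq bitseq :=
  if r is r'.+1 then map (cons false) (bitseqs r') ++ map (cons true) (bitseqs r')
  else [:: [::]].

Fixpoint resize_bits (r : nat) (a : bitseq) : bitseq :=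
  if r is r'.+1 then head false a :: resize_bits r' (behead a) else [::].

Definition xor_independent (bs : seq nat) : Prop :=
  forall a, xor_comb bs a = 0 -> forall i, i < size bs -> nth false a i = false.

Definition xor_span (bs : seq nat) : seq nat := map (xor_comb bs) (bitseqs (size bs)).

Lemma xor_comb_nil bs : xor_comb bs [::] = 0.
Proof. by case: bs. Qed.

Lemma nth_bits_xor a b i : nth false (bits_xor a b) i = nth false a i (+) nth false b i.
Proof. by elim: a b i => [|x a IHa] [|y b] [|i] //=; rewrite addbF. Qed.

Lemma size_bits_xor a b : size (bits_xor a b) = maxn (size a) (size b).
Proof.
elim: a b => [|x a IHa] [|y b] //=; rewrite ?max0n ?maxn0 //.
by rewrite IHa maxnSS.
Qed.

Lemma xor_comb_bits_xor bs a b :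
  xor_comb bs (bits_xor a b) = Nat.lxor (xor_comb bs a) (xor_comb bs b).
Proof.
elim: bs a b => [|c bs IHbs] [|x a] [|y b] //=; rewrite ?Nat.lxor_0_l ?Nat.lxor_0_r //.
rewrite IHbs lxorACA; congr Nat.lxor.
by case: x; case: y; rewrite /= ?Nat.lxor_0_l ?Nat.lxor_0_r ?Nat.lxor_nilpotent.
Qed.

Lemma xor_comb_false bs a : ~~ has id a -> xor_comb bs a = 0.
Proof.
elim: bs a => [|c bs IHbs] [|x a] //= /norP[/negbTE-> /IHbs->].
exact: Nat.lxor_0_l.
Qed.

Lemma xor_comb_eq0 bs a : xor_independent bs -> size a <= size bs ->
  (xor_comb bs a == 0) = ~~ has id a.
Proof.
move=> bs_free a_size; apply/eqP/idP => [a0|]; last exact: xor_comb_false.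
rewrite -all_predC; apply/(all_nthP false) => i i_lt /=.
by rewrite (bs_free _ a0) //; apply: leq_trans a_size.
Qed.

Lemma xor_comb_resize bs a : xor_comb bs (resize_bits (size bs) a) = xor_comb bs a.
Proof.
elim: bs a => [|c bs IHbs] [|x a] //=; rewrite ?IHbs // xor_comb_nil.
exact: Nat.lxor_0_l.
Qed.

Lemma size_resize_bits r a : size (resize_bits r a) = r.
Proof. by elim: r a => [|r IHr] a //=; rewrite IHr. Qed.

Lemma resize_bits_cat a b : resize_bits (size a) (a ++ b) = a.
Proof. by elim: a => //= x a ->. Qed.

Lemma xor_comb_rcons bs x a :
  xor_comb (rcons bs x) a = Nat.lxor (xor_comb bs a) (if nth false a (size bs) then x else 0).
Proof.
elim: bs a => [|c bs IHbs] [|y a] /=; rewrite ?Nat.lxor_0_l ?Nat.lxor_0_r //.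
by rewrite IHbs Nat.lxor_assoc.
Qed.

Lemma mem_bitseqs r a : (a \in bitseqs r) = (size a == r).
Proof.
elim: r a => [|r IHr] [|x a] //=; rewrite mem_cat.
  by apply/negbTE/norP; split; apply/negP => /mapP[].
rewrite eqSS -IHr; case: x; rewrite (mem_map (@cons_inj _ _)).
  by rewrite [X in X || _](negbTE _) //; apply/mapP => -[].
by rewrite [X in _ || X](negbTE _) ?orbF //; apply/mapP => -[].
Qed.

Lemma size_bitseqs r : size (bitseqs r) = 2 ^ r.
Proof. by elim: r => //= r IHr; rewrite size_cat !size_map IHr expnS mul2n addnn. Qed.

Lemma uniq_bitseqs r : uniq (bitseqs r).
Proof.
elim: r => //= r IHr; rewrite cat_uniq !map_inj_uniq ?IHr ?andbT //=; try exact: cons_inj.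
by apply/hasPn => _ /mapP[a _ ->]; apply/negP => /mapP[].
Qed.

Lemma xor_comb_ltn n bs a : all (fun b => b < 2 ^ n) bs -> xor_comb bs a < 2 ^ n.
Proof.
elim: bs a => [|c bs IHbs] [|x a] /=; rewrite ?expn_gt0 // => /andP[c_lt bs_lt].
by apply: lxor_ltn; [case: x; rewrite ?expn_gt0 | exact: IHbs].
Qed.

Lemma xor_comb_inj bs :
  xor_independent bs -> {in bitseqs (size bs) &, injective (xor_comb bs)}.
Proof.
move=> bs_free a b; rewrite !mem_bitseqs => /eqP a_size /eqP b_size ab.
have /bs_free ab0 : xor_comb bs (bits_xor a b) = 0.
  by rewrite xor_comb_bits_xor ab Nat.lxor_nilpotent.
apply: (@eq_from_nth _ false) => [|i]; first by rewrite a_size b_size.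
rewrite a_size => /ab0; rewrite nth_bits_xor.
by case: (nth false a i); case: (nth false b i).
Qed.

Lemma uniq_xor_span bs : xor_independent bs -> uniq (xor_span bs).
Proof. by move=> bs_free; rewrite map_inj_in_uniq ?uniq_bitseqs //; apply: xor_comb_inj. Qed.

Lemma size_xor_span bs : size (xor_span bs) = 2 ^ size bs.
Proof. by rewrite size_map size_bitseqs. Qed.

Lemma xor_independent_rcons bs x :
  xor_independent bs -> x \notin xor_span bs -> xor_independent (rcons bs x).
Proof.
move=> bs_free x_new a; rewrite xor_comb_rcons.
case a_x: (nth false a (size bs)) => a0 i; rewrite size_rcons ltnS leq_eqVlt.
  suff : x \in xor_span bs by rewrite (negbTE x_new).
  apply/mapP; exists (resize_bits (size bs) a); first by rewrite mem_bitseqs size_resize_bits.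
  by rewrite xor_comb_resize (Nat.lxor_eq _ _ a0).
rewrite Nat.lxor_0_r in a0.
by case/orP => [/eqP-> // | ]; apply: bs_free.
Qed.

Lemma xor_comb_rcons_new bs x w : all (fun a => size a <= size bs) w ->
  map (xor_comb (rcons bs x)) (rcons w (rcons (nseq (size bs) false) true)) =
  rcons (map (xor_comb bs) w) x.
Proof.
move=> w_size; rewrite map_rcons; congr rcons.
  apply/eq_in_map => a /(allP w_size) a_size.
  by rewrite xor_comb_rcons nth_default // Nat.lxor_0_r.
rewrite xor_comb_rcons nth_rcons size_nseq ltnn eqxx -xor_comb_resize -cats1.
have := resize_bits_cat (nseq (size bs) false) [:: true]; rewrite size_nseq => ->.
by rewrite xor_comb_false ?has_nseq ?andbF // Nat.lxor_0_l.
Qed.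

Definition constraint := (seq nat * bool)%type.

Definition xor_sat (s : seq nat) (c : constraint) : bool :=
  (foldr Nat.lxor 0 [seq nth 0 s p | p <- c.1] == 0) == c.2.

Definition mask_sat (w : seq bitseq) (c : constraint) : bool :=
  (~~ has id (foldr bits_xor [::] [seq nth [::] w p | p <- c.1])) == c.2.

Lemma xor_sat_comb bs w c :
  xor_independent bs -> all (fun a => size a <= size bs) w ->
  xor_sat (map (xor_comb bs) w) c = mask_sat w c.
Proof.
move=> bs_free w_size; rewrite /xor_sat /mask_sat.
have -> : [seq nth 0 (map (xor_comb bs) w) p | p <- c.1] =
          map (xor_comb bs) [seq nth [::] w p | p <- c.1].
  rewrite -map_comp; apply: eq_map => p /=.
  case: (ltnP p (size w)) => p_w; first by rewrite (nth_map [::]).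
  by rewrite !nth_default ?size_map ?xor_comb_nil.
have -> : foldr Nat.lxor 0 (map (xor_comb bs) [seq nth [::] w p | p <- c.1]) =
          xor_comb bs (foldr bits_xor [::] [seq nth [::] w p | p <- c.1]).
  by elim: (c.1) => [|p ps /= ->]; rewrite ?xor_comb_nil ?xor_comb_bits_xor.
rewrite xor_comb_eq0 //; elim: (c.1) => //= p ps IHps.
rewrite size_bits_xor geq_max IHps andbT.
case: (ltnP p (size w)) => p_w; first exact/(allP w_size)/mem_nth.
by rewrite nth_default.
Qed.

Section Search.

Variable cons_at : nat -> seq constraint.

Definition step_sat T (sat : seq T -> constraint -> bool) (s : seq T) : bool :=
  all (sat s) (cons_at (size s).-1).

Definition prefix_sat T (sat : seq T -> constraint -> bool) (s : seq T) : bool :=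
  all (fun k => step_sat sat (take k.+1 s)) (iota 0 (size s)).

Lemma prefix_sat_catl T sat (s t : seq T) : prefix_sat sat (s ++ t) -> prefix_sat sat s.
Proof.
rewrite /prefix_sat size_cat iotaD all_cat => /andP[+ _].
congr (is_true _); apply: eq_in_all => k; rewrite mem_iota add0n => /= k_lt.
by rewrite takel_cat.
Qed.

Lemma prefix_sat_rcons T sat (s : seq T) x :
  prefix_sat sat (rcons s x) = prefix_sat sat s && step_sat sat (rcons s x).
Proof.
rewrite /prefix_sat size_rcons -addn1 iotaD all_cat /= andbT add0n take_oversize ?size_rcons //.
congr andb; apply: eq_in_all => k; rewrite mem_iota add0n => k_lt.
by rewrite -cats1 takel_cat.
Qed.

Lemma step_sat_comb bs w :
  xor_independent bs -> all (fun a => size a <= size bs) w ->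
  step_sat xor_sat (map (xor_comb bs) w) = step_sat mask_sat w.
Proof.
by move=> bs_free w_size; rewrite /step_sat size_map; apply: eq_all => c; apply: xor_sat_comb.
Qed.

Lemma prefix_sat_comb bs w :
  xor_independent bs -> all (fun a => size a <= size bs) w ->
  prefix_sat xor_sat (map (xor_comb bs) w) = prefix_sat mask_sat w.
Proof.
move=> bs_free w_size; rewrite /prefix_sat size_map; apply: eq_all => k.
rewrite -map_take step_sat_comb //.
by move: w_size; rewrite -[w in all _ w](cat_take_drop k.+1) all_cat => /andP[].
Qed.

Lemma prefix_sat_all u :
  (forall k, k < size u -> all (fun c => all (fun p => p <= k) c.1) (cons_at k)) ->
  prefix_sat xor_sat u = all (fun k => all (xor_sat u) (cons_at k)) (iota 0 (size u)).
Proof.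
move=> cons_le; apply: eq_in_all => k; rewrite mem_iota add0n => k_lt.
rewrite /step_sat size_takel //=; apply: eq_in_all => c /(allP (cons_le k k_lt)) c_le.
congr (_ == _ == _); congr foldr; apply/eq_in_map => p /(allP c_le) p_le.
by rewrite nth_take.
Qed.

(* A card is recorded by its bit mask over the current independent family of [r]
   earlier cards; the mask [rcons (nseq r false) true] stands for a card outside their
   span, which becomes the next member of the family. *)
Fixpoint leaf_ranks (r : nat) (w : seq bitseq) (k : nat) : seq nat :=
  if k is k'.+1 then
    let branch r' w' := if step_sat mask_sat w' then leaf_ranks r' w' k' else [::] in
    branch r.+1 (rcons w (rcons (nseq r false) true)) ++
    flatten [seq branch r (rcons w a) | a <- bitseqs r]
  else [:: r].

Lemma leaf_ranks_ge r w k : all (leq r) (leaf_ranks r w k).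
Proof.
elim: k r w => [|k IHk] r w /=; first by rewrite leqnn.
rewrite all_cat all_flatten; apply/andP; split.
  by case: ifP => // _; apply: sub_all (IHk _ _) => r'; apply: ltnW.
by apply/allP => _ /mapP[a _ ->]; case: ifP.
Qed.

Section Counting.

Variable n : nat.
Local Notation q := (2 ^ n).

Definition ext_count (s : seq nat) (k : nat) : nat :=
  \sum_(t : k.-tuple 'I_q) prefix_sat xor_sat (s ++ map val t).

Definition ext_choices (r0 r : nat) : nat := \prod_(r0 <= i < r) (q - 2 ^ i).

Definition rank_weight (r0 : nat) (ranks : seq nat) : nat :=
  \sum_(r <- ranks) ext_choices r0 r.

Lemma ext_count0 s : prefix_sat xor_sat s -> ext_count s 0 = 1.
Proof.
move=> s_sat; rewrite /ext_count (eq_bigr (fun=> 1)) => [|t _].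
  by rewrite sum1_card card_tuple.
by rewrite tuple0 cats0 s_sat.
Qed.

Lemma ext_countS s k : ext_count s k.+1 = \sum_(x : 'I_q) ext_count (rcons s x) k.
Proof.
rewrite /ext_count sum_tuple_cons; apply: eq_bigr => x _; apply: eq_bigr => t _.
by rewrite /= cat_rcons.
Qed.

Lemma ext_count_unsat s x k :
  ~~ step_sat xor_sat (rcons s x) -> ext_count (rcons s x) k = 0.
Proof.
move=> sx_unsat; rewrite /ext_count big1 // => t _.
suff /negbTE-> : ~~ prefix_sat xor_sat (rcons s x ++ map val t) by [].
by apply: contra sx_unsat => /prefix_sat_catl; rewrite prefix_sat_rcons => /andP[].
Qed.

Lemma rank_weight_step r ranks : all (leq r.+1) ranks ->
  (q - 2 ^ r) * rank_weight r.+1 ranks = rank_weight r ranks.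
Proof.
move=> ranks_gt; rewrite /rank_weight big_distrr; apply: eq_big_seq => r' r'_in.
by rewrite /ext_choices (big_ltn (allP ranks_gt r' r'_in)).
Qed.

Lemma ext_count_leaf_ranks k bs w :
  xor_independent bs -> all (fun b => b < q) bs ->
  all (fun a => size a <= size bs) w -> prefix_sat mask_sat w ->
  ext_count (map (xor_comb bs) w) k = rank_weight (size bs) (leaf_ranks (size bs) w k).
Proof.
elim: k bs w => [|k IHk] bs w bs_free bs_lt w_size w_sat.
  by rewrite ext_count0 ?prefix_sat_comb // /rank_weight big_seq1 /ext_choices big_geq.
set r := size bs; set s := map (xor_comb bs) w.
set w_new := rcons w (rcons (nseq r false) true).
pose branch x := if step_sat xor_sat (rcons s x) then ext_count (rcons s x) k else 0.
have new_branch x : x < q -> x \notin xor_span bs -> branch x =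
    if step_sat mask_sat w_new then rank_weight r.+1 (leaf_ranks r.+1 w_new k) else 0.
  move=> x_lt x_new; have bsx_free := xor_independent_rcons bs_free x_new.
  have wn_size : all (fun a => size a <= size (rcons bs x)) w_new.
    rewrite all_rcons !size_rcons size_nseq leqnn /=.
    by apply: sub_all w_size => a /leqW.
  rewrite /branch -xor_comb_rcons_new // step_sat_comb //; case: ifP => // wn_sat.
  by rewrite IHk // ?size_rcons ?all_rcons ?x_lt // prefix_sat_rcons w_sat wn_sat.
have span_branch a : a \in bitseqs r -> branch (xor_comb bs a) =
    if step_sat mask_sat (rcons w a) then rank_weight r (leaf_ranks r (rcons w a) k) else 0.
  rewrite mem_bitseqs => /eqP a_size.
  have wa_size : all (fun a => size a <= r) (rcons w a) by rewrite all_rcons a_size leqnn.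
  rewrite /branch -map_rcons step_sat_comb //; case: ifP => // wa_sat.
  by rewrite IHk // prefix_sat_rcons w_sat.
have span_lt : all (fun x => x < q) (xor_span bs).
  by apply/allP => _ /mapP[a _ ->]; apply: xor_comb_ltn.
rewrite ext_countS (eq_bigr (fun x : 'I_q => branch x)) => [|x _]; last first.
  by rewrite /branch; case: ifPn => // /ext_count_unsat->.
rewrite -(big_mkord xpredT branch).
rewrite (sum_nat_split_seq (uniq_xor_span bs_free) span_lt new_branch).
rewrite size_xor_span /rank_weight /= big_cat big_flatten !big_map /= addnC.
congr addn.
  case: ifP => _; last by rewrite big_nil muln0.
  exact: rank_weight_step (leaf_ranks_ge _ _ _).
by apply: eq_big_seq => a a_r; rewrite span_branch //; case: ifP; rewrite ?big_nil.
Qed.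

End Counting.

End Search.

Lemma forall_ord4 (P : pred 'I_4) :
  [forall i, P i] = [&& P (ix 0), P (ix 1), P (ix 2) & P (ix 3)].
Proof.
apply/forallP/and4P => [P_all | [P0 P1 P2 P3] [m m_lt]]; first by split; apply: P_all.
have -> : Ordinal m_lt = ix m by apply: val_inj; rewrite /ix /= inordK.
by move: m_lt; do 4?[case: m => [|m] //].
Qed.

(* Both rows of the upper half first, then the lower half two columns at a time: every
   quad is then completed as early as possible, which keeps the search tree small. *)
Definition cell_order : seq (nat * nat) :=
  [:: (0, 0); (0, 1); (0, 2); (0, 3); (1, 0); (1, 1); (1, 2); (1, 3);
      (2, 0); (3, 0); (2, 1); (3, 1); (2, 2); (2, 3); (3, 2); (3, 3)].

Definition cell_pos (c : 'I_4 * 'I_4) : 'I_16 := inord (index (c.1 : nat, c.2 : nat) cell_order).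

Definition pos_cell (k : 'I_16) : 'I_4 * 'I_4 :=
  (inord (nth (0, 0) cell_order k).1, inord (nth (0, 0) cell_order k).2).

Lemma mem_cell_order (i j : 'I_4) : (i : nat, j : nat) \in cell_order.
Proof. by case: i j => [[|[|[|[|i]]]] ?] [[|[|[|[|j]]]] ?]. Qed.

Lemma cell_posK : cancel cell_pos pos_cell.
Proof.
move=> [i j]; rewrite /pos_cell /cell_pos inordK; last by rewrite index_mem mem_cell_order.
by rewrite nth_index ?mem_cell_order //= !inord_val.
Qed.

Lemma pos_cellK : cancel pos_cell cell_pos.
Proof.
move=> k; have : nth (0, 0) cell_order k \in cell_order by rewrite mem_nth.
move/(allP (isT : all (fun c => (c.1 < 4) && (c.2 < 4)) cell_order))/andP => [lt1 lt2].
rewrite /cell_pos /pos_cell [X in index X _]/= !inordK // -surjective_pairing.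
by rewrite index_uniq ?inord_val.
Qed.

(* The positions in [cell_order] of the four rows, the four columns and the two diagonals. *)
Definition magic_quads : seq (seq nat) :=
  [:: [:: 0; 1; 2; 3]; [:: 4; 5; 6; 7]; [:: 8; 10; 12; 13]; [:: 9; 11; 14; 15];
      [:: 0; 4; 8; 9]; [:: 1; 5; 10; 11]; [:: 2; 6; 12; 14]; [:: 3; 7; 13; 15];
      [:: 0; 5; 12; 15]; [:: 3; 6; 10; 9]].

Section Arrays.

Variable n : nat.
Local Notation q := (2 ^ n).

Definition array_of_tuple (t : 16.-tuple 'I_q) : array44 n := [ffun c => tnth t (cell_pos c)].

Lemma card_array44 (P : pred (array44 n)) :
  #|[pred A | P A]| = \sum_(t : 16.-tuple 'I_q) P (array_of_tuple t).
Proof.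
rewrite -sum1_card (reindex array_of_tuple) /=; last first.
  exists (fun A => [tuple A (pos_cell k) | k < 16]) => [t _ | A _].
    by apply: eq_from_tnth => k; rewrite tnth_mktuple ffunE pos_cellK.
  by apply/ffunP => c; rewrite ffunE tnth_mktuple cell_posK.
by rewrite big_mkcond; apply: eq_bigr => t _; rewrite inE; case: (P _).
Qed.

Lemma injectiveb_array_of_tuple t : injectiveb (array_of_tuple t) = uniq (map val t).
Proof.
rewrite (map_inj_uniq val_inj); apply/injectiveP/tuple_uniqP => t_inj i j tij.
  have : array_of_tuple t (pos_cell i) = array_of_tuple t (pos_cell j).
    by rewrite !ffunE !pos_cellK.
  by move/t_inj/(congr1 cell_pos); rewrite !pos_cellK.
by move: tij; rewrite !ffunE => /t_inj/(can_inj cell_posK).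
Qed.

Lemma array_of_tuple_ix t i j : i < 4 -> j < 4 ->
  array_of_tuple t (ix i, ix j) = nth 0 (map val t) (index (i, j) cell_order) :> nat.
Proof.
move=> i_lt j_lt; have := mem_cell_order (ix i) (ix j).
rewrite -index_mem ffunE /cell_pos [X in index X _]/= /ix !inordK // => ij_lt.
by rewrite -tnth_map (tnth_nth 0) inordK.
Qed.

Lemma quads_array_of_tuple t :
  [&& [forall i, row_quad (array_of_tuple t) i], [forall j, col_quad (array_of_tuple t) j],
      diag_quad (array_of_tuple t) & antidiag_quad (array_of_tuple t)] =
  all (fun Q => xor_sat (map val t) (Q, true)) magic_quads.
Proof.
rewrite !forall_ord4 /row_quad /col_quad /diag_quad /antidiag_quad /is_quad.
rewrite !array_of_tuple_ix //= /xor_sat /= !Nat.lxor_0_r !Nat.lxor_assoc !eqb_id.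
by rewrite !andbA andbT.
Qed.

End Arrays.

Definition magic_constraints_at (k : nat) : seq constraint :=
  [seq (Q, true) | Q <- magic_quads & foldr maxn 0 Q == k] ++
  [seq ([:: j; k], false) | j <- iota 0 k].

(* Tabulated, so that the evaluation of the search tree computes it only once. *)
Definition magic_constraint_table : seq (seq constraint) :=
  [seq magic_constraints_at k | k <- iota 0 16].

Definition magic_constraints (k : nat) : seq constraint := nth [::] magic_constraint_table k.

Lemma magic_constraintsE k : k < 16 -> magic_constraints k = magic_constraints_at k.
Proof. by move=> k_lt; rewrite /magic_constraints (nth_map 0) ?size_iota // nth_iota. Qed.

Lemma magic_constraints_at_le k :
  all (fun c => all (fun p => p <= k) c.1) (magic_constraints_at k).
Proof.
rewrite all_cat !all_map; apply/andP; split.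
  apply/allP => Q; rewrite mem_filter => /andP[/eqP <- _] /=; apply/allP => p.
  elim: Q => //= x Q IHQ; rewrite inE leq_max => /orP[/eqP-> | /IHQ->]; by rewrite ?leqnn ?orbT.
by apply/allP => j; rewrite mem_iota /= leqnn !andbT => /ltnW.
Qed.

Lemma magic_prefix_sat u : size u = 16 ->
  prefix_sat magic_constraints xor_sat u =
  all (fun Q => xor_sat u (Q, true)) magic_quads && uniq u.
Proof.
move=> u_size; rewrite prefix_sat_all => [|k]; last first.
  by rewrite u_size => /magic_constraintsE->; apply: magic_constraints_at_le.
rewrite (uniq_all_nth 0) u_size.
rewrite (eq_in_all (a2 := fun k => all (xor_sat u) (magic_constraints_at k))) => [|k]; last first.
  by rewrite mem_iota => /magic_constraintsE->.
pose quads_at k := [seq (Q, true) | Q <- magic_quads & foldr maxn 0 Q == k].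
pose pairs_at k := [seq ([:: j; k], false) | j <- iota 0 k].
transitivity (all (fun k => all (xor_sat u) (quads_at k)) (iota 0 16) &&
              all (fun k => all (xor_sat u) (pairs_at k)) (iota 0 16)).
  by rewrite -all_predI; apply: eq_all => k; rewrite /= all_cat.
congr andb.
  have quads_perm : perm_eq (flatten [seq quads_at k | k <- iota 0 16])
                            [seq (Q, true) | Q <- magic_quads] by [].
  by rewrite -all_map -all_flatten (perm_all _ quads_perm) all_map.
apply: eq_all => k; rewrite all_map; apply: eq_all => j.
by rewrite /xor_sat /= Nat.lxor_0_r lxor_eq0 eqbF_neg.
Qed.

Lemma magic_array_of_tuple n (t : 16.-tuple 'I_(2 ^ n)) :
  magic_quad_square (array_of_tuple t) = prefix_sat magic_constraints xor_sat (map val t).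
Proof.
rewrite magic_prefix_sat ?size_map ?size_tuple // /magic_quad_square /quad_square.
by rewrite injectiveb_array_of_tuple quads_array_of_tuple andbC.
Qed.

Lemma magic_leaf_ranks :
  sort leq (leaf_ranks magic_constraints 0 [::] 16) =
  nseq 160 4 ++ nseq 2730 5 ++ nseq 2837 6 ++ nseq 171 7 ++ nseq 1 8.
Proof. by apply/eqP; vm_cast_no_check (erefl true). Qed.

Lemma ext_choicesS n r :
  ext_choices n 0 r.+1 + 2 ^ r * ext_choices n 0 r = 2 ^ n * ext_choices n 0 r.
Proof.
rewrite /ext_choices big_nat_recr //=.
have [r_le | n_lt] := leqP r n; first by rewrite mulnC -mulnDl subnK ?leq_pexp2l.
have -> : \prod_(0 <= i < r) (2 ^ n - 2 ^ i) = 0.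
  by rewrite (@big_cat_nat _ _ _ n) ?(ltnW n_lt) //= [X in _ * X]big_ltn // subnn mul0n muln0.
by rewrite !(mul0n, muln0).
Qed.

Lemma magic_count_formula n :
  \sum_(r <- nseq 160 4 ++ nseq 2730 5 ++ nseq 2837 6 ++ nseq 171 7 ++ nseq 1 8)
    ext_choices n 0 r =
  2 ^ n * (2 ^ n - 1) * (2 ^ n - 2) * (2 ^ n - 4) * (2 ^ n - 8) *
  (10 + 85 * (2 ^ n - 16) + 43 * (2 ^ n - 16) * (2 ^ n - 32)
      + (2 ^ n - 16) * (2 ^ n - 32) * (2 ^ n - 64)).
Proof.
pose P := ext_choices n 0; rewrite !big_cat !big_nseq !iter_addn_0 /= -/P.
have P4 : P 4 = (2 ^ n - 1) * (2 ^ n - 2) * (2 ^ n - 4) * (2 ^ n - 8).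
  by rewrite /P /ext_choices !big_nat_recr // big_geq //= mul1n.
have P_recr r : P r.+1 = P r * (2 ^ n - 2 ^ r) by rewrite /P /ext_choices big_nat_recr.
have -> : 2 ^ n * (2 ^ n - 1) * (2 ^ n - 2) * (2 ^ n - 4) * (2 ^ n - 8) *
  (10 + 85 * (2 ^ n - 16) + 43 * (2 ^ n - 16) * (2 ^ n - 32)
      + (2 ^ n - 16) * (2 ^ n - 32) * (2 ^ n - 64)) =
  10 * (2 ^ n * P 4) + 85 * (2 ^ n * P 5) + 43 * (2 ^ n * P 6) + 2 ^ n * P 7.
  by rewrite (P_recr 6) (P_recr 5) (P_recr 4) P4; ring.
rewrite -!ext_choicesS -/P; ring.
Qed.

Theorem mainTheorem9 (n : nat) (hn : 4 <= n) :
  #|[pred A : array44 n | magic_quad_square A]| =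
  2 ^ n * (2 ^ n - 1) * (2 ^ n - 2) * (2 ^ n - 4) * (2 ^ n - 8) *
  (10 + 85 * (2 ^ n - 16) + 43 * (2 ^ n - 16) * (2 ^ n - 32)
      + (2 ^ n - 16) * (2 ^ n - 32) * (2 ^ n - 64)).
Proof.
rewrite card_array44.
have -> : \sum_(t : 16.-tuple 'I_(2 ^ n)) magic_quad_square (array_of_tuple t) =
          ext_count magic_constraints n (map (xor_comb [::]) [::]) 16.
  by apply: eq_bigr => t _; rewrite magic_array_of_tuple.
have nil_free : xor_independent [::] by [].
rewrite (@ext_count_leaf_ranks _ _ 16 [::] [::] nil_free isT isT isT) -[size [::]]/0.
rewrite /rank_weight -(perm_big _ (permEl (perm_sort leq _))).
by rewrite magic_leaf_ranks magic_count_formula.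
Qed.
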